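(* Let $L$ be a finite-dimensional pure, nonnilpotent, solvable Lie algebra over $\mathbb{C}$ of breadth $2$ such that $\dim[L,L]=2$ and $\dim L^k=1$ for all integers $k\geq 2$. Then for some positive integer $n$, $L$ has a basis $\{x_1,x_2,z_1,z_2,\ldots,z_n,z\}$ such that one of the following holds: (1) $n$ is even and the only nonzero brackets of basis elements (up to antisymmetry) are $[x_1,x_2]=x_1$ and $[z_i,z_{i+1}]=z$ for all $i=1,3,5,\ldots,n-1$; or (2) $n$ is odd and the only nonzero brackets of basis elements (up to antisymmetry) are $[x_1,x_2]=x_1$, $[x_2,z_1]=z$ and $[z_i,z_{i+1}]=z$ for all $i=2,4,6,\ldots,n-1$.
   Context: For $x\in L$, the breadth of $x$ is $b(x)=\mathrm{rank}(\mathrm{ad}_x)$, and $b(L)=\max\{b(x)\mid x\in L\}$. $L$ is pure if it has no abelian ideal as a direct summand; equivalently $Z(L)\subseteq[L,L]$, where $Z(L)$ is the center. The lower central series is indexed by $L^0=L$, $L^1=[L,L]$ and $L^k=[L,L^{k-1}]$ for $k\geq 2$. *)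

From HB Require Import structures.
From mathcomp Require Import all_boot all_order all_algebra all_field.
From mathcomp Require Import complex.
From mathcomp Require Import reals.
Set Implicit Arguments. Unset Strict Implicit. Unset Printing Implicit Defensive.
Import Order.TTheory GRing.Theory Num.Theory.
Local Open Scope ring_scope.


Definition is_lie_bracket (K : fieldType) (V : vectType K) (br : V -> V -> V) : Prop :=
  [/\ (forall (a : K) (x y z : V), br (a *: x + y) z = a *: br x z + br y z),
      (forall (a : K) (x y z : V), br z (a *: x + y) = a *: br z x + br z y),
      (forall x : V, br x x = 0) &
      (forall x y z : V, br x (br y z) + br y (br z x) + br z (br x y) = 0)].

Section LieDefs.
Variables (K : fieldType) (V : vectType K) (br : V -> V -> V).

Definition lbr (A B : {vspace V}) : {vspace V} :=
  <<[seq br a b | a <- vbasis A, b <- vbasis B]>>%VS.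

(* lower central series: L^0 = L, L^1 = [L,L], L^k = [L, L^(k-1)] *)
Fixpoint lcs (k : nat) : {vspace V} :=
  match k with 0 => fullv | k'.+1 => lbr fullv (lcs k') end.

Fixpoint dser (k : nat) : {vspace V} :=
  match k with 0 => fullv | k'.+1 => lbr (dser k') (dser k') end.

Definition lie_solvable : Prop := exists k, dser k = 0%VS.
Definition lie_nilpotent : Prop := exists k, lcs k = 0%VS.

Definition lie_ideal (I : {vspace V}) : Prop :=
  forall x y, y \in I -> br x y \in I.
Definition lie_abelian (I : {vspace V}) : Prop :=
  forall x y, x \in I -> y \in I -> br x y = 0.

Definition lie_pure : Prop :=
  forall I J : {vspace V}, lie_ideal I -> lie_ideal J -> lie_abelian I ->
    directv (I + J)%VS -> (I + J)%VS = fullv -> I = 0%VS.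

Definition breadth (x : V) : nat := (\dim (limg (linfun (br x))))%VS.
Definition lie_breadth_eq (n : nat) : Prop :=
  (exists x, breadth x = n) /\ (forall x, breadth x <= n)%N.

End LieDefs.

From HB Require Import structures.
From mathcomp Require Import all_boot all_order all_algebra all_field.
From mathcomp Require Import complex.
From mathcomp Require Import reals.
From Stdlib Require Import Classical.
Import Order.TTheory GRing.Theory Num.Theory.
Local Open Scope ring_scope.
Set Implicit Arguments. Unset Strict Implicit. Unset Printing Implicit Defensive.

(* The dimension hypotheses make L^2 = L^3 a line <[u]> stable
   under every ad v.  Since [L, L] acts trivially on it, some x satisfies
   [u, x] = u, and a correction z of an element of L^1 outside <[u]> is
   central, so that L^1 = <[u]> + <[z]>; purity puts the whole centre inside
   L^1.  The subspace P = {v | [u, v] = 0, [x, v] \in <[z]>} spans L together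
   with u and x, and the bracket restricts to an alternating form on P with
   values in <[z]>.  If its radical is <[z]>, a Darboux basis of P, with x
   corrected inside P to commute with it, gives case (1).  Otherwise a radical
   element z_1 normalized by [x, z_1] = z splits off, and the Darboux basis
   of P :&: ker (ad x) gives case (2). *)

Lemma map_nth_iota1 (T : Type) (x0 : T) (s : seq T) :
  [seq nth x0 s i.-1 | i <- iota 1 (size s)] = s.
Proof.
rewrite (iotaDl 1 0) -map_comp.
have shift : (fun i => nth x0 s i.-1) \o addn 1 =1 nth x0 s by [].
by rewrite (eq_map shift) map_nth_iota0 // take_size.
Qed.

Section VectorFacts.
Variables (F : fieldType) (V : vectType F).
Implicit Types (U W : {vspace V}) (x y : V) (X : seq V).

Lemma basis_of_cons W X x :
  basis_of W X -> x \notin W -> basis_of (<[x]> + W)%VS (x :: X).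
Proof.
by case/andP=> /eqP <- freeX xW; rewrite /basis_of span_cons eqxx free_cons xW.
Qed.

Lemma addv_line_translate U x y : y - x \in U -> (<[y]> + U = <[x]> + U)%VS.
Proof.
suff sub v w : w - v \in U -> (<[w]> + U <= <[v]> + U)%VS.
  by move=> yxU; apply/subv_anti/andP; split; apply: sub; rewrite // -opprB memvN.
move=> wvU; rewrite subv_add addvSr andbT -memvE.
by rewrite -(subrK v w) addrC memv_add ?memv_line.
Qed.

Lemma exists_line_compl W x : x \notin W ->
  exists J : {vspace V}, [/\ (W <= J)%VS, directv (<[x]> + J) & (<[x]> + J)%VS = fullv].
Proof.
move=> xW; set U := (<[x]> + W)%VS; exists (W + U^C)%VS; split.
- exact: addvSl.
- apply/directv_addP/eqP; rewrite -subv0; apply/subvP => _ /memv_capP [/vlineP [k ->]].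
  case/memv_addP => w Ww [y Uy kxE].
  have y0 : y = 0.
    apply/eqP; rewrite -memv0 -(capv_compl U) memv_cap Uy andbT.
    by rewrite -(addKr w y) -kxE addrC memv_add ?memvN ?memvZ ?memv_line.
  rewrite y0 addr0 in kxE; have [-> | k0] := eqVneq k 0; first by rewrite scale0r mem0v.
  by case/negP: xW; rewrite -(scalerK k0 x) kxE memvZ.
- by rewrite addvA addv_complf.
Qed.

End VectorFacts.

Section LieBracket.
Variables (F : fieldType) (V : vectType F) (br : V -> V -> V).
Hypothesis lieV : is_lie_bracket br.

Definition adl (y : V) := br y.
Definition adr (y : V) := br^~ y.

Lemma adl_is_linear y : linear (adl y).
Proof. by case: lieV => _ brDZr _ _ a u v; rewrite /adl brDZr. Qed.
Lemma adr_is_linear y : linear (adr y).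
Proof. by case: lieV => brDZl _ _ _ a u v; rewrite /adr brDZl. Qed.
HB.instance Definition _ y :=
  GRing.isLinear.Build F V V *:%R (adl y) (adl_is_linear y).
HB.instance Definition _ y :=
  GRing.isLinear.Build F V V *:%R (adr y) (adr_is_linear y).

Definition ad (y : V) : 'End(V) := linfun (adl y).
Lemma adE y x : ad y x = br y x. Proof. by rewrite lfunE. Qed.

Lemma brDl x y w : br (x + y) w = br x w + br y w. Proof. exact: (linearD (adr w)). Qed.
Lemma brDr x y w : br w (x + y) = br w x + br w y. Proof. exact: (linearD (adl w)). Qed.
Lemma brZl a x w : br (a *: x) w = a *: br x w. Proof. exact: (linearZZ (adr w)). Qed.
Lemma brZr a x w : br w (a *: x) = a *: br w x. Proof. exact: (linearZZ (adl w)). Qed.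
Lemma brNr x w : br w (- x) = - br w x. Proof. exact: (linearN (adl w)). Qed.
Lemma brBr x y w : br w (x - y) = br w x - br w y. Proof. exact: (linearB (adl w)). Qed.

Lemma brxx x : br x x = 0. Proof. by case: lieV. Qed.

Lemma brC x y : br y x = - br x y.
Proof.
apply/eqP; rewrite -addr_eq0 addrC.
by have := brxx (x + y); rewrite brDl !brDr !brxx add0r addr0 => ->.
Qed.

Lemma jacobi x y w : br x (br y w) + br y (br w x) + br w (br x y) = 0.
Proof. by case: lieV. Qed.

Lemma br_spanr a (Y : seq V) (C : {vspace V}) :
  {in Y, forall y, br a y \in C} -> forall b, b \in <<Y>>%VS -> br a b \in C.
Proof.
move=> aYC b Yb; rewrite -adE memv_preim; apply: subvP Yb.
by apply/span_subvP => y Yy; rewrite -memv_preim adE aYC.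
Qed.

Lemma br_span (X Y : seq V) (C : {vspace V}) :
  {in X & Y, forall x y, br x y \in C} ->
  forall a b, a \in <<X>>%VS -> b \in <<Y>>%VS -> br a b \in C.
Proof.
move=> XYC a b Xa Yb; apply: (br_spanr _ Yb) => y Yy.
by rewrite brC memvN; apply: (br_spanr _ Xa) => x Xx; rewrite brC memvN XYC.
Qed.

Lemma mem_lbr (A B : {vspace V}) a b : a \in A -> b \in B -> br a b \in lbr br A B.
Proof.
rewrite -{1}(span_basis (vbasisP A)) -{1}(span_basis (vbasisP B)) => Aa Bb.
by apply: (br_span _ Aa Bb) => x y Ax By; apply/memv_span/allpairs_f.
Qed.

Lemma lbr_subv (A B C : {vspace V}) :
  {in A & B, forall a b, br a b \in C} -> (lbr br A B <= C)%VS.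
Proof.
move=> ABC; apply/span_subvP => _ /allpairsP [[a b] [/= Aa Bb ->]].
by apply: ABC; apply: vbasis_mem.
Qed.

Lemma lbrS (A1 A2 B1 B2 : {vspace V}) :
  (A1 <= A2)%VS -> (B1 <= B2)%VS -> (lbr br A1 B1 <= lbr br A2 B2)%VS.
Proof.
by move=> /subvP sA /subvP sB; apply: lbr_subv => a b /sA A2a /sB B2b; apply: mem_lbr.
Qed.

Lemma mem_lcs1 a b : br a b \in lcs br 1.
Proof. exact: mem_lbr (memvf a) (memvf b). Qed.

Lemma mem_lcsS k a b : b \in lcs br k -> br a b \in lcs br k.+1.
Proof. exact: mem_lbr (memvf a). Qed.

Lemma lcsS_subv k : (lcs br k.+1 <= lcs br k)%VS.
Proof. by elim: k => [|k IHk]; [exact: subvf | exact: lbrS (subvv _) IHk]. Qed.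

Lemma pure_center_sub_lcs1 c :
  lie_pure br -> (forall y, br c y = 0) -> c \in lcs br 1.
Proof.
move=> pureL cZ; apply: contraT => c_notin.
have [J [lcs1J dxcJ cJfull]] := exists_line_compl c_notin.
have idealc : lie_ideal br <[c]>%VS.
  by move=> x _ /vlineP [k ->]; rewrite brZr brC cZ oppr0 scaler0 mem0v.
have idealJ : lie_ideal br J by move=> x y _; apply: subvP lcs1J _ (mem_lcs1 x y).
have abelc : lie_abelian br <[c]>%VS by move=> _ y /vlineP [k ->] _; rewrite brZl cZ scaler0.
have := memv_line c; rewrite (pureL _ _ idealc idealJ abelc dxcJ cJfull) memv0.
by move/eqP=> c0; rewrite c0 mem0v in c_notin.
Qed.

Section StableLine.
Variable u : V.
Hypotheses (lcs2E : lcs br 2 = <[u]>%VS) (lcs3E : lcs br 3 = lcs br 2).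

Lemma br_line_stable v : br v u \in <[u]>%VS.
Proof. by rewrite -lcs2E -lcs3E; apply: mem_lcsS; rewrite lcs2E memv_line. Qed.

(* The eigenvalue of ad v on the stable line <[u]> is a character of the Lie
   algebra, so it vanishes on brackets. *)
Lemma br_lcs1_line w : w \in lcs br 1 -> br w u = 0.
Proof.
suff /subvP sub : (lcs br 1 <= lker (ad u))%VS.
  by move=> /sub; rewrite memv_ker adE => /eqP uw; rewrite brC uw oppr0.
apply: lbr_subv => a b _ _; rewrite memv_ker adE.
have [[ka aE] [kb bE]] := (vlineP _ _ (br_line_stable a), vlineP _ _ (br_line_stable b)).
have := jacobi a b u; rewrite bE brZr aE [br u a]brC aE brNr brZr bE.
by rewrite !scalerA mulrC addrN add0r => ->.
Qed.

Lemma exists_br_eq_self : u != 0 -> exists x, br u x = u.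
Proof.
move=> u_neq0.
have /subvPn [y _] : ~~ (fullv <= lker (ad u))%VS.
  apply: contra u_neq0 => /subvP ker_u.
  suff : (lbr br fullv (lcs br 2) <= 0)%VS by rewrite [lbr _ _ _]lcs3E lcs2E -memvE memv0.
  apply: lbr_subv => a b _; rewrite lcs2E => /vlineP [k ->].
  move: (ker_u a (memvf a)); rewrite memv_ker adE => /eqP ua.
  by rewrite brZr brC ua oppr0 scaler0 mem0v.
rewrite memv_ker adE brC oppr_eq0; have [k kE] := vlineP _ _ (br_line_stable y).
rewrite kE scaler_eq0 negb_or => /andP [k0 _].
exists (- k^-1 *: y).
by rewrite brZr brC kE scalerN scalerA mulNr mulVf // scaleN1r opprK.
Qed.

Lemma br_center_shift x w b :
  br x u = - u -> w \in lcs br 1 -> (lcs br 1 <= <[u]> + <[w]>)%VS ->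
  br x w = b *: u -> forall y, br y (w + b *: u) = 0.
Proof.
move=> xu w1 lcs1uw xw y.
have [al yu] := vlineP _ _ (br_line_stable y).
have [be yw] : exists be, br y w = be *: u by apply/vlineP; rewrite -lcs2E; apply: mem_lcsS.
(* In the Jacobi identity for y, x, w the term [w, [y, x]] vanishes since w
   centralizes [L, L] = <[u], [w]>. *)
have wyx : br w (br y x) = 0.
  have /memv_addP [_ /vlineP [p ->] [_ /vlineP [q ->] ->]] := subvP lcs1uw _ (mem_lcs1 y x).
  by rewrite brDr !brZr brxx (br_lcs1_line w1) !scaler0 addr0.
have := jacobi y x w; rewrite wyx addr0 xw brZr yu [br w y]brC yw brNr brZr xu.
by rewrite scalerN opprK brDr brZr yu yw addrC.
Qed.

End StableLine.

Lemma lcs_normal_triple :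
  \dim (lcs br 1) = 2%N -> \dim (lcs br 2) = 1%N -> \dim (lcs br 3) = 1%N ->
  exists u x z, [/\ u != 0, br u x = u & forall v, br v u \in <[u]>%VS] /\
    [/\ z \notin <[u]>%VS, forall y, br y z = 0 & lcs br 1 = (<[u]> + <[z]>)%VS].
Proof.
move=> dim1 dim2 dim3.
have lcs3E : lcs br 3 = lcs br 2 by apply/eqP; rewrite eqEdim lcsS_subv dim2 dim3.
set u := vpick (lcs br 2).
have u_neq0 : u != 0 by rewrite vpick0 -dimv_eq0 dim2.
have lcs2E : lcs br 2 = <[u]>%VS.
  by apply/eqP; rewrite eq_sym eqEdim -memvE memv_pick dim_vline u_neq0 dim2.
have u1 : u \in lcs br 1 by apply: subvP (lcsS_subv 1) _ _; rewrite lcs2E memv_line.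
have [x xu] := exists_br_eq_self lcs2E lcs3E u_neq0.
have [w w1 wu] : exists2 w, w \in lcs br 1 & w \notin <[u]>%VS.
  by apply/subvPn/negP => /dimvS; rewrite dim1 dim_vline u_neq0.
have lcs1E : lcs br 1 = (<[w]> + <[u]>)%VS.
  have free_wu : free [:: w; u] by rewrite free_cons span_seq1 wu seq1_free u_neq0.
  apply/eqP; rewrite eq_sym eqEdim dim1 -[<[u]>%VS]span_seq1 -span_cons (eqnP free_wu).
  by rewrite andbT; apply/span_subvP => v; rewrite !inE => /orP [] /eqP ->.
have [b xw] : exists b, br x w = b *: u by apply/vlineP; rewrite -lcs2E; apply: mem_lcsS.
have zw : w + b *: u - w \in <[u]>%VS by rewrite addrAC subrr add0r memvZ ?memv_line.
exists u, x, (w + b *: u); split; split => //.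
- exact: br_line_stable lcs2E lcs3E.
- by apply: contra wu => zu; rewrite -(addrK (b *: u) w) memvB ?memvZ ?memv_line.
- apply: (br_center_shift lcs2E lcs3E) xw => //; first by rewrite brC xu.
  by rewrite lcs1E addvC.
- by rewrite addvC lcs1E (addv_line_translate zw).
Qed.

Section Darboux.
Variable z : V.
Hypotheses (z_neq0 : z != 0) (zZ : forall y, br y z = 0).

(* The bracket induces a nondegenerate alternating form on P / <[z]>. *)
Definition symplectic_mod (P : {vspace V}) : Prop :=
  [/\ z \in P, forall a b, a \in P -> b \in P -> br a b \in <[z]>%VS &
      forall r, r \in P -> (forall b, b \in P -> br r b = 0) -> r \in <[z]>%VS].

(* Indices are 0-based: [s_(2k), s_(2k+1)] = z. *)
Definition darboux_pattern (i j : nat) : V :=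
  if ~~ odd i && (j == i.+1) then z else if ~~ odd j && (i == j.+1) then - z else 0.

Definition darboux_seq (s : seq V) : Prop :=
  forall i j, (i < size s)%N -> (j < size s)%N -> br s`_i s`_j = darboux_pattern i j.

Lemma darboux_seq_cons2 e f s :
  br e f = z -> {in s, forall v, br e v = 0 /\ br f v = 0} -> darboux_seq s ->
  darboux_seq [:: e, f & s].
Proof.
move=> ef efs ds.
have [e_s f_s] : (forall k, (k < size s)%N -> br e s`_k = 0) /\
    (forall k, (k < size s)%N -> br f s`_k = 0).
  by split=> k /(mem_nth 0) /efs [].
move=> [|[|i]] [|[|j]] //= lti ltj; rewrite /darboux_pattern /=.
- by rewrite brxx.
- by rewrite e_s ?andbF.
- by rewrite brC ef.
- by rewrite brxx.
- by rewrite f_s ?andbF.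
- by rewrite brC e_s ?oppr0 ?andbF.
- by rewrite brC f_s ?oppr0 ?andbF.
- by rewrite ds // /darboux_pattern !negbK.
Qed.

Section DarbouxStep.
Variables (P : {vspace V}) (e f : V).
Hypotheses (sympP : symplectic_mod P) (Pe : e \in P) (Pf : f \in P) (ef : br e f = z).

Definition pair_orth : {vspace V} := (P :&: lker (ad e) :&: lker (ad f))%VS.

Lemma mem_pair_orth v : (v \in pair_orth) = [&& v \in P, br e v == 0 & br f v == 0].
Proof. by rewrite !memv_cap !memv_ker !adE andbA. Qed.

Lemma pair_orth_subv : (pair_orth <= P)%VS.
Proof. by apply/subvP => v; rewrite mem_pair_orth => /and3P []. Qed.

Lemma br_pair_kill y : br y e \in <[z]>%VS -> br y f \in <[z]>%VS ->
  exists c d : F,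
    br (y + (c *: e + d *: f)) e = 0 /\ br (y + (c *: e + d *: f)) f = 0.
Proof.
move=> /vlineP [k ye] /vlineP [m yf]; exists (- m), k.
rewrite !brDl !brZl ye yf !brxx ef [br f e]brC ef !scaler0 addr0 scaleNr.
by rewrite add0r scalerN !subrr.
Qed.

Lemma pair_orth_decomp b :
  b \in P -> exists c d : F, b + (c *: e + d *: f) \in pair_orth.
Proof.
move=> Pb; have [_ brP _] := sympP.
have [c [d [be bf]]] := br_pair_kill (brP _ _ Pb Pe) (brP _ _ Pb Pf).
exists c, d; rewrite mem_pair_orth [br e _]brC [br f _]brC be bf oppr0 eqxx !andbT.
by rewrite !memvD ?memvZ.
Qed.

Lemma symplectic_pair_orth : symplectic_mod pair_orth.
Proof.
have [zP brP radP] := sympP; split.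
- by rewrite mem_pair_orth zP !zZ eqxx.
- by move=> a b /(subvP pair_orth_subv) Pa /(subvP pair_orth_subv) Pb; apply: brP.
- move=> r; rewrite mem_pair_orth => /and3P [Pr /eqP er /eqP fr] r_orth.
  apply: radP => // b /pair_orth_decomp [c [d /r_orth]].
  by rewrite !brDr !brZr [br r e]brC [br r f]brC er fr oppr0 !scaler0 !addr0.
Qed.

Lemma dim_pair_orth : (\dim pair_orth < \dim P)%N.
Proof.
rewrite (ltn_leqif (dimv_leqif_eq pair_orth_subv)).
have e_notin : e \notin pair_orth.
  by rewrite mem_pair_orth [br f e]brC ef oppr_eq0 (negbTE z_neq0) !andbF.
by apply: contraNneq e_notin => ->.
Qed.

Lemma basis_pair_orth X : basis_of pair_orth X -> basis_of P [:: e, f & X].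
Proof.
move=> bX.
have f_notin : f \notin pair_orth by rewrite mem_pair_orth ef (negbTE z_neq0) andbF.
have e_notin : e \notin (<[f]> + pair_orth)%VS.
  apply/negP => /memv_addP [_ /vlineP [k ->] [q Qq eE]].
  move: Qq; rewrite mem_pair_orth => /and3P [_ _ /eqP fq].
  have := congr1 (br f) eE; rewrite [br f e]brC ef brDr brZr brxx fq scaler0 addr0.
  by move/eqP; rewrite oppr_eq0 (negbTE z_neq0).
have -> : P = (<[e]> + (<[f]> + pair_orth))%VS.
  apply/eqP; rewrite eqEsubv !subv_add -!memvE Pe Pf pair_orth_subv !andbT.
  apply/subvP => b /pair_orth_decomp [c [d Qb]].
  set W := (<[e]> + (<[f]> + pair_orth))%VS.
  have Wef : c *: e + d *: f \in W.
    by rewrite memv_add ?memvZ ?memv_line ?(subvP (addvSl _ _) _ (memv_line f)).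
  rewrite -(rpredDr _ Wef).
  exact: subvP (addvSr _ _) _ (subvP (addvSr _ _) _ Qb).
by apply: basis_of_cons e_notin; apply: basis_of_cons bX f_notin.
Qed.

End DarbouxStep.

Lemma exists_symplectic_pair P : symplectic_mod P -> ~~ (P <= <[z]>)%VS ->
  exists e f, [/\ e \in P, f \in P & br e f = z].
Proof.
move=> [_ brP radP] /subvPn [e Pe ez].
have /subvPn [g Pg] : ~~ (P <= lker (ad e))%VS.
  apply: contra ez => /subvP eP; apply: radP => // b /eP.
  by rewrite memv_ker adE => /eqP.
rewrite memv_ker adE; have [k eg] := vlineP _ _ (brP _ _ Pe Pg).
rewrite eg scaler_eq0 negb_or => /andP [k0 _].
exists e, (k^-1 *: g); split; rewrite ?memvZ //.
by rewrite brZr eg scalerA mulVf // scale1r.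
Qed.

Theorem darboux P x :
  symplectic_mod P -> (forall b, b \in P -> br x b \in <[z]>%VS) ->
  exists s x', [/\ basis_of P (s ++ [:: z]), ~~ odd (size s), darboux_seq s,
                   x' - x \in P & {in s, forall v, br x' v = 0}].
Proof.
elim: {P}_.+1 {-2}P (ltnSn (\dim P)) x => // n IHn P ltPn x sympP xP.
have [zP _ _] := sympP.
have [Pz | /(exists_symplectic_pair sympP) [e [f [Pe Pf ef]]]] := boolP (P <= <[z]>)%VS.
  exists [::], x; split => //; last by rewrite subrr mem0v.
  suff -> : P = <[z]>%VS by exact: seq1_basis.
  by apply/eqP; rewrite eqEsubv Pz -memvE.
set Q := pair_orth P e f.
have [c [d [x1e x1f]]] := br_pair_kill ef (xP _ Pe) (xP _ Pf).
set x1 := x + (c *: e + d *: f).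
have x1Q b : b \in Q -> br x1 b \in <[z]>%VS.
  rewrite mem_pair_orth => /and3P [Pb /eqP eb /eqP fb].
  by rewrite !brDl !brZl eb fb !scaler0 !addr0 xP.
have ltQn : (\dim Q < n)%N := leq_trans (dim_pair_orth Pe ef) ltPn.
have [s [x' [bQ even_s ds x'x1 x's]]] :=
  IHn Q ltQn x1 (symplectic_pair_orth sympP Pe Pf ef) x1Q.
have sQ : {subset s <= Q} by move=> v sv; apply: basis_mem bQ _; rewrite mem_cat sv.
have x'E : x' = x1 + (x' - x1) by rewrite addrC subrK.
move: (x'x1); rewrite mem_pair_orth => /and3P [_ /eqP ex'x1 /eqP fx'x1].
exists [:: e, f & s], x'; split.
- exact: basis_pair_orth.
- by rewrite /= negbK.
- apply: darboux_seq_cons2 => // v /sQ; rewrite mem_pair_orth.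
  by case/and3P => _ /eqP -> /eqP ->.
- have -> : x' - x = (x' - x1) + (c *: e + d *: f).
    by rewrite /x1 opprD [x' + (_ + _)]addrA subrK.
  apply: memvD; first exact: subvP (pair_orth_subv P e f) _ x'x1.
  by rewrite memvD ?memvZ.
- move=> v; rewrite !inE => /or3P [/eqP -> | /eqP -> | /x's //]; rewrite x'E brDl.
  + by rewrite x1e brC ex'x1 oppr0 addr0.
  + by rewrite x1f brC fx'x1 oppr0 addr0.
Qed.

End Darboux.

Definition normal_form_even n (x1 x2 z : V) (zs : nat -> V) : Prop :=
  ~~ odd n /\
  br x1 x2 = x1 /\ br x1 z = 0 /\ br x2 z = 0 /\
  (forall i, (1 <= i <= n)%N ->
     [/\ br x1 (zs i) = 0, br x2 (zs i) = 0 & br (zs i) z = 0]) /\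
  (forall i j, (1 <= i <= n)%N -> (1 <= j <= n)%N ->
     br (zs i) (zs j) =
       if odd i && (j == i.+1) then z
       else if odd j && (i == j.+1) then - z else 0).

Definition normal_form_odd n (x1 x2 z : V) (zs : nat -> V) : Prop :=
  odd n /\
  br x1 x2 = x1 /\ br x1 z = 0 /\ br x2 z = 0 /\
  br x2 (zs 1%N) = z /\
  (forall i, (1 <= i <= n)%N -> [/\ br x1 (zs i) = 0 & br (zs i) z = 0]) /\
  (forall i, (2 <= i <= n)%N -> br x2 (zs i) = 0) /\
  (forall i j, (1 <= i <= n)%N -> (1 <= j <= n)%N ->
     br (zs i) (zs j) =
       if ~~ odd i && (j == i.+1) then z
       else if ~~ odd j && (i == j.+1) then - z else 0).

Section NormalForm.
Variables u x z : V.
Hypotheses (u_neq0 : u != 0) (xu : br u x = u) (u_stable : forall v, br v u \in <[u]>%VS).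
Hypotheses (zu : z \notin <[u]>%VS) (zZ : forall y, br y z = 0).
Hypotheses (lcs1E : lcs br 1 = (<[u]> + <[z]>)%VS) (pureL : lie_pure br).

Lemma z_neq0 : z != 0.
Proof. by apply: contraNneq zu => ->; rewrite mem0v. Qed.

Lemma u_notin_z : u \notin <[z]>%VS.
Proof.
apply: contra zu => /vlineP [k uE].
have k0 : k != 0 by apply: contraNneq u_neq0 => k0; rewrite uE k0 scale0r.
by rewrite -(scalerK k0 z) -uE memvZ ?memv_line.
Qed.

Lemma br_x_u : br x u = - u. Proof. by rewrite brC xu. Qed.

Lemma mem_lcs1_z v : v \in lcs br 1 -> br x v \in <[z]>%VS -> v \in <[z]>%VS.
Proof.
rewrite lcs1E => /memv_addP [_ /vlineP [p ->] [_ /vlineP [q ->] ->]].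
rewrite brDr !brZr br_x_u zZ scaler0 addr0 scalerN memvN.
have [-> | p0] := eqVneq p 0; first by rewrite scale0r add0r memvZ ?memv_line.
by move=> /(memvZ p^-1); rewrite scalerK // (negbTE u_notin_z).
Qed.

Lemma br_preim_z a b : br x a \in <[z]>%VS -> br x b \in <[z]>%VS -> br a b \in <[z]>%VS.
Proof.
move=> /vlineP [ka xa] /vlineP [kb xb]; apply: mem_lcs1_z; first exact: mem_lcs1.
have := jacobi x a b; rewrite [br b x]brC xb xa brNr !brZr !zZ !scaler0 oppr0 !addr0.
by move=> ->; rewrite mem0v.
Qed.

(* Spanned, in the final basis, by the z_i and z. *)
Definition heis_part : {vspace V} := (lker (ad u) :&: (ad x @^-1: <[z]>))%VS.

Lemma mem_heis_part v : (v \in heis_part) = (br u v == 0) && (br x v \in <[z]>%VS).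
Proof. by rewrite memv_cap memv_ker -memv_preim !adE. Qed.

Lemma z_in_heis_part : z \in heis_part.
Proof. by rewrite mem_heis_part !zZ eqxx mem0v. Qed.

Lemma br_heis_part a b : a \in heis_part -> b \in heis_part -> br a b \in <[z]>%VS.
Proof. by rewrite !mem_heis_part => /andP [_ xa] /andP [_ xb]; apply: br_preim_z. Qed.

Lemma heis_part_full : (<[u]> + (<[x]> + heis_part))%VS = fullv.
Proof.
apply/eqP; rewrite eqEsubv subvf /=; apply/subvP => v _.
have [al vu] := vlineP _ _ (u_stable v).
have [p [q xvE]] : exists p q, br x (v + al *: x) = p *: u + q *: z.
  move: (mem_lcs1 x (v + al *: x)); rewrite lcs1E.
  by case/memv_addP => _ /vlineP [p ->] [_ /vlineP [q ->] ->]; exists p, q.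
have hv : v + al *: x + p *: u \in heis_part.
  rewrite mem_heis_part; apply/andP; split.
    by rewrite !brDr !brZr brxx xu [br u v]brC vu scaler0 addr0 addNr.
  by rewrite brDr xvE brZr br_x_u scalerN addrAC subrr add0r memvZ ?memv_line.
set W := (<[u]> + (<[x]> + heis_part))%VS.
have Wx : al *: x \in W := subvP (addvSr _ _) _ (subvP (addvSl _ _) _ (memvZ al (memv_line x))).
have Wu : p *: u \in W := subvP (addvSl _ _) _ (memvZ p (memv_line u)).
rewrite -(rpredDr _ Wx) -(rpredDr _ Wu).
exact: subvP (addvSr _ _) _ (subvP (addvSr _ _) _ hv).
Qed.

Lemma heis_part_radical r :
  r \in heis_part -> br x r = 0 -> (forall b, b \in heis_part -> br r b = 0) ->
  r \in <[z]>%VS.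
Proof.
move=> hr xr r_orth; apply: mem_lcs1_z; last by rewrite xr mem0v.
apply: pure_center_sub_lcs1 pureL _ => y.
have /subvP/(_ y (memvf y)) : (fullv <= lker (ad r))%VS.
  move: hr; rewrite mem_heis_part => /andP [/eqP ur _].
  rewrite -heis_part_full !subv_add -!memvE !memv_ker !adE.
  rewrite [br r u]brC [br r x]brC ur xr oppr0 eqxx /=.
  by apply/subvP => b hb; rewrite memv_ker adE r_orth.
by rewrite memv_ker adE => /eqP.
Qed.

Lemma br_u_translate x' : x' - x \in heis_part -> br u x' = u.
Proof.
rewrite mem_heis_part => /andP [/eqP ux'x _].
by rewrite -(subrK x x') brDr ux'x xu add0r.
Qed.

Lemma basis_full x' X :
  x' - x \in heis_part -> basis_of heis_part X -> basis_of fullv [:: u, x' & X].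
Proof.
move=> x'x bX; have ux' := br_u_translate x'x.
have x'_notin : x' \notin heis_part by rewrite mem_heis_part ux' (negbTE u_neq0).
have u_notin : u \notin (<[x']> + heis_part)%VS.
  apply/negP => /memv_addP [_ /vlineP [k ->] [q hq uE]].
  have : br x' u \in <[z]>%VS.
    rewrite uE brDr brZr brxx scaler0 add0r -(subrK x x') brDl memvD //.
      exact: br_heis_part.
    by move: hq; rewrite mem_heis_part => /andP [].
  by rewrite brC ux' memvN (negbTE u_notin_z).
rewrite -heis_part_full -(addv_line_translate x'x).
by apply: basis_of_cons u_notin; apply: basis_of_cons bX x'_notin.
Qed.

Lemma heis_part_neq_line : heis_part != <[z]>%VS.
Proof.
apply/eqP => hpE.
have bfull : basis_of fullv [:: u; x; z].
  by apply: basis_full; rewrite ?subrr ?mem0v // hpE seq1_basis ?z_neq0.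
suff : (lcs br 1 <= <[u]>)%VS by rewrite lcs1E subv_add -!memvE (negbTE zu) andbF.
apply: lbr_subv => a b; rewrite -(span_basis bfull) => a_in b_in.
apply: (br_span _ a_in b_in) => v w; rewrite !inE.
case/or3P=> /eqP -> /or3P [] /eqP ->;
  by rewrite ?brxx ?[br z _]brC ?xu ?br_x_u ?zZ ?oppr0 ?mem0v ?memvN ?memv_line.
Qed.

Lemma normal_form_even_case :
  (forall r, r \in heis_part -> (forall b, b \in heis_part -> br r b = 0) -> r \in <[z]>%VS) ->
  exists n x2 zs, (0 < n)%N /\
    basis_of fullv ([:: u; x2] ++ [seq zs i | i <- iota 1 n] ++ [:: z]) /\
    normal_form_even n u x2 z zs.
Proof.
move=> radP.
have sympP : symplectic_mod z heis_part.
  by split; [exact: z_in_heis_part | exact: br_heis_part | exact: radP].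
have xP b : b \in heis_part -> br x b \in <[z]>%VS by rewrite mem_heis_part => /andP [].
have [s [x' [bs even_s ds x'x x's]]] := darboux z_neq0 zZ sympP xP.
have sP : {subset s <= heis_part} by move=> v sv; apply: basis_mem bs _; rewrite mem_cat sv.
exists (size s), x', (fun i => s`_i.-1); split.
  rewrite lt0n size_eq0; apply: contra heis_part_neq_line => /eqP s0.
  by move: bs; rewrite s0 => /span_basis <-; rewrite span_seq1.
split; first by rewrite map_nth_iota1; exact: basis_full.
split; first exact: even_s.
split; first exact: br_u_translate x'x.
do 2 (split; first exact: zZ).
split.
  move=> [//|i] /andP [_ lti] /=; have /sP := mem_nth 0 lti.
  by rewrite mem_heis_part => /andP [/eqP ? _]; split; rewrite ?x's ?mem_nth.
by move=> [//|i] [//|j] /andP [_ lti] /andP [_ ltj]; rewrite /= ds.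
Qed.

Lemma exists_radical_normalized :
  (exists r, [/\ r \in heis_part, forall b, b \in heis_part -> br r b = 0 & r \notin <[z]>%VS]) ->
  exists z1, [/\ z1 \in heis_part, forall b, b \in heis_part -> br z1 b = 0 & br x z1 = z].
Proof.
case=> r [hr r_orth rz].
have [c xr] : exists c, br x r = c *: z.
  by apply/vlineP; move: hr; rewrite mem_heis_part => /andP [].
have c0 : c != 0.
  by apply: contra rz => /eqP c0; apply: heis_part_radical; rewrite // xr c0 scale0r.
exists (c^-1 *: r); split; first by rewrite memvZ.
- by move=> b hb; rewrite brZl r_orth // scaler0.
- by rewrite brZr xr scalerA mulVf // scale1r.
Qed.

Section OddCase.
Variable z1 : V.
Hypotheses (hz1 : z1 \in heis_part) (z1_orth : forall b, b \in heis_part -> br z1 b = 0).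
Hypothesis xz1 : br x z1 = z.

Definition heis_ker : {vspace V} := (heis_part :&: lker (ad x))%VS.

Lemma mem_heis_ker v : (v \in heis_ker) = (v \in heis_part) && (br x v == 0).
Proof. by rewrite memv_cap memv_ker adE. Qed.

Lemma heis_part_split : heis_part = (<[z1]> + heis_ker)%VS.
Proof.
apply/eqP; rewrite eqEsubv subv_add -memvE hz1 capvSl !andbT.
apply/subvP => b hb; have [k xb] : exists k, br x b = k *: z.
  by apply/vlineP; move: hb; rewrite mem_heis_part => /andP [].
rewrite -(subrKC (k *: z1) b) memv_add ?memvZ ?memv_line //.
by rewrite mem_heis_ker memvB ?memvZ //= brBr brZr xz1 xb subrr.
Qed.

Lemma symplectic_heis_ker : symplectic_mod z heis_ker.
Proof.
split.
- by rewrite mem_heis_ker z_in_heis_part zZ eqxx.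
- by move=> a b; rewrite !mem_heis_ker => /andP [ha _] /andP [hb _]; apply: br_heis_part.
- move=> r; rewrite mem_heis_ker => /andP [hr /eqP xr] r_orth.
  apply: heis_part_radical => // b; rewrite heis_part_split.
  case/memv_addP => _ /vlineP [k ->] [q hq ->].
  by rewrite brDr brZr brC z1_orth // oppr0 scaler0 add0r r_orth.
Qed.

Lemma normal_form_odd_case :
  exists n x2 zs, (0 < n)%N /\
    basis_of fullv ([:: u; x2] ++ [seq zs i | i <- iota 1 n] ++ [:: z]) /\
    normal_form_odd n u x2 z zs.
Proof.
have xP b : b \in heis_ker -> br x b \in <[z]>%VS.
  by rewrite mem_heis_ker => /andP [_ /eqP ->]; rewrite mem0v.
have [s [x' [bs even_s ds x'x x's]]] := darboux z_neq0 zZ symplectic_heis_ker xP.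
have sP : {subset s <= heis_part}.
  move=> v sv; suff : v \in heis_ker by rewrite mem_heis_ker => /andP [].
  by apply: basis_mem bs _; rewrite mem_cat sv.
have x'x_hp : x' - x \in heis_part by move: x'x; rewrite mem_heis_ker => /andP [].
have z1_notin : z1 \notin heis_ker by rewrite mem_heis_ker xz1 (negbTE z_neq0) andbF.
have bz1 : basis_of heis_part (z1 :: s ++ [:: z]).
  by rewrite heis_part_split; apply: basis_of_cons.
have zsP i : (i < (size s).+1)%N -> (z1 :: s)`_i \in heis_part.
  by move=> lti; apply: basis_mem bz1 _; rewrite -cat_cons mem_cat mem_nth.
exists (size s).+1, x', (fun i => (z1 :: s)`_i.-1); split => //.
split; first by rewrite map_nth_iota1; exact: basis_full.
split; first exact: even_s.
split; first exact: br_u_translate x'x_hp.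
do 2 (split; first exact: zZ).
split.
  by rewrite /= -(subrKC x x') brDl xz1 [br (x' - x) _]brC z1_orth // oppr0 addr0.
split.
  move=> [//|i] /andP [_ lti]; have := zsP i lti; rewrite mem_heis_part.
  by case/andP => /eqP ? _; split; rewrite ?zZ.
split; first by move=> [|[|i]] // /andP [_ lti]; rewrite /= x's ?mem_nth.
move=> [//|[|i]] [//|[|j]] /andP [_ lti] /andP [_ ltj] /=.
- by rewrite brxx.
- by rewrite z1_orth ?sP ?mem_nth ?andbF.
- by rewrite brC z1_orth ?sP ?mem_nth ?oppr0 ?andbF.
- by rewrite ds // /darboux_pattern !negbK.
Qed.

End OddCase.

Lemma exists_normal_form :
  exists n x2 zs, (0 < n)%N /\
    basis_of fullv ([:: u; x2] ++ [seq zs i | i <- iota 1 n] ++ [:: z]) /\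
    (normal_form_even n u x2 z zs \/ normal_form_odd n u x2 z zs).
Proof.
have [rad | no_rad] := classic (exists r, [/\ r \in heis_part,
  forall b, b \in heis_part -> br r b = 0 & r \notin <[z]>%VS]).
- have [z1 [hz1 z1_orth xz1]] := exists_radical_normalized rad.
  have [n [x2 [zs [n0 [bfull nf]]]]] := normal_form_odd_case hz1 z1_orth xz1.
  by exists n, x2, zs; do 2 split => //; right.
- have radP r : r \in heis_part -> (forall b, b \in heis_part -> br r b = 0) -> r \in <[z]>%VS.
    by move=> hr r_orth; apply/negPn/negP => rz; apply: no_rad; exists r.
  have [n [x2 [zs [n0 [bfull nf]]]]] := normal_form_even_case radP.
  by exists n, x2, zs; do 2 split => //; left.
Qed.

End NormalForm.

End LieBracket.

Theorem theorem3p4 (R : realType) (V : vectType R[i]) (br : V -> V -> V) :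
  is_lie_bracket br ->
  lie_pure br -> ~ lie_nilpotent br -> lie_solvable br ->
  lie_breadth_eq br 2 ->
  \dim (lcs br 1) = 2%N ->
  (forall k, (2 <= k)%N -> \dim (lcs br k) = 1%N) ->
  exists (n : nat) (x1 x2 z : V) (zs : nat -> V),
    (0 < n)%N /\
    basis_of fullv ([:: x1; x2] ++ [seq zs i | i <- iota 1 n] ++ [:: z]) /\
    ( (* case (1) *)
      (~~ odd n /\
       br x1 x2 = x1 /\ br x1 z = 0 /\ br x2 z = 0 /\
       (forall i, (1 <= i <= n)%N ->
          [/\ br x1 (zs i) = 0, br x2 (zs i) = 0 & br (zs i) z = 0]) /\
       (forall i j, (1 <= i <= n)%N -> (1 <= j <= n)%N ->
          br (zs i) (zs j) =
            if odd i && (j == i.+1) then z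
            else if odd j && (i == j.+1) then - z else 0))
    \/
      (* case (2) *)
      (odd n /\
       br x1 x2 = x1 /\ br x1 z = 0 /\ br x2 z = 0 /\
       br x2 (zs 1%N) = z /\
       (forall i, (1 <= i <= n)%N -> [/\ br x1 (zs i) = 0 & br (zs i) z = 0]) /\
       (forall i, (2 <= i <= n)%N -> br x2 (zs i) = 0) /\
       (forall i j, (1 <= i <= n)%N -> (1 <= j <= n)%N ->
          br (zs i) (zs j) =
            if ~~ odd i && (j == i.+1) then z
            else if ~~ odd j && (i == j.+1) then - z else 0))).
Proof.
move=> lieV pureL _ _ _ dim_lcs1 dim_lcs.
have [u [x [z [[u_neq0 xu u_stable] [zu zZ lcs1E]]]]] :=
  lcs_normal_triple lieV dim_lcs1 (dim_lcs 2%N isT) (dim_lcs 3%N isT).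
have [n [x2 [zs nf]]] := exists_normal_form lieV u_neq0 xu u_stable zu zZ lcs1E pureL.
by exists n, u, x2, z, zs.
Qed.
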